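(* Let $G$ be a finite group and $T,T'$ be $G$-transfer systems. If $(T,T')$ is a compatible pair, then $\mathrm{Hull}(T)\subseteq T'$.
   Context: A $G$-transfer system is a partial order $\to$ on the set of subgroups of $G$ such that: $K\to H$ implies $K\le H$; $H\to H$ for all $H$; $L\to K$ and $K\to H$ imply $L\to H$; $K\to H$ implies $K\cap L\to H\cap L$ for every $L\le G$; $K\to H$ implies $gKg^{-1}\to gHg^{-1}$ for all $g\in G$. A transfer system is saturated if whenever $L\le K\le H$ and $L\to H$ is in it, then $K\to H$ is in it; $\mathrm{Hull}(T)$ is the smallest saturated $G$-transfer system containing $T$. A pair $(T,T')$ of $G$-transfer systems is compatible if (1) $T\subseteq T'$, and (2) for all subgroups $A,B,C$ with $B,C\le A$: if $B\to A$ is in $T$ and $B\cap C\to B$ is in $T'$, then $C\to A$ is in $T'$. *)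

From mathcomp Require Import all_boot all_fingroup.
Set Implicit Arguments. Unset Strict Implicit. Unset Printing Implicit Defensive.
Local Open Scope group_scope.

(* A relation on subgroups of G: R K H means "K -> H". *)
Definition subgrel (gT : finGroupType) := {group gT} -> {group gT} -> Prop.

Definition transfer_system (gT : finGroupType) (G : {group gT}) (R : subgrel gT) : Prop :=
  (forall K H : {group gT}, R K H -> K \subset H /\ H \subset G) /\
  (forall H : {group gT}, H \subset G -> R H H) /\
  (forall L K H : {group gT}, R L K -> R K H -> R L H) /\
  (forall K H : {group gT}, R K H -> R H K -> K = H) /\
  (forall K H L : {group gT}, L \subset G -> R K H -> R (K :&: L)%G (H :&: L)%G) /\
  (forall (K H : {group gT}) (g : gT), g \in G -> R K H -> R (K :^ g)%G (H :^ g)%G).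

Definition saturated (gT : finGroupType) (R : subgrel gT) : Prop :=
  forall L K H : {group gT}, L \subset K -> K \subset H -> R L H -> R K H.

Definition rsub (gT : finGroupType) (R S : subgrel gT) : Prop :=
  forall K H : {group gT}, R K H -> S K H.

Definition hull (gT : finGroupType) (G : {group gT}) (T : subgrel gT) : subgrel gT :=
  fun K H => forall S : subgrel gT,
    transfer_system G S -> saturated S -> rsub T S -> S K H.

Definition compatible (gT : finGroupType) (G : {group gT}) (T T' : subgrel gT) : Prop :=
  rsub T T' /\
  forall A B C : {group gT}, A \subset G -> B \subset A -> C \subset A ->
    T B A -> T' (B :&: C)%G B -> T' C A.

From mathcomp Require Import all_boot all_fingroup.
Set Implicit Arguments. Unset Strict Implicit. Unset Printing Implicit Defensive.
Local Open Scope group_scope.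

(* The hull of a transfer system T is explicit: K -> H lies in Hull(T)
   exactly when K <= H and L -> H is in T for some L <= K.  Compatibility,
   applied to a transfer L -> H of T and to K <= H (where L :&: K = L, so
   the needed L -> L is reflexivity in T'), puts every such K -> H in T'. *)

Definition sat_closure (gT : finGroupType) (T : subgrel gT) : subgrel gT :=
  fun K H => K \subset H /\ exists2 L : {group gT}, L \subset K & T L H.

Lemma setI_group_idPr (gT : finGroupType) (A B : {group gT}) :
  B \subset A -> (A :&: B)%G = B.
Proof. by move=> sBA; apply: val_inj; apply/setIidPr. Qed.

Lemma setI_group_idPl (gT : finGroupType) (A B : {group gT}) :
  A \subset B -> (A :&: B)%G = A.
Proof. by move=> sAB; apply: val_inj; apply/setIidPl. Qed.

Section SatClosure.

Variables (gT : finGroupType) (G : {group gT}) (T : subgrel gT).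
Hypothesis TS : transfer_system G T.

Lemma sat_closure_trans (L K H : {group gT}) :
  sat_closure T L K -> sat_closure T K H -> sat_closure T L H.
Proof.
have [Tsub [_ [Ttr [_ [Tres _]]]]] := TS.
move=> [sLK [L1 sL1L TL1K]] [sKH [L2 sL2K TL2H]]; split; first exact: subset_trans sLK sKH.
have [sL2H sHG] := Tsub _ _ TL2H.
have TL1L2 : T (L1 :&: L2)%G L2.
  by rewrite -{2}(setI_group_idPr sL2K); apply: Tres (subset_trans sL2H sHG) TL1K.
exists (L1 :&: L2)%G; first exact: subset_trans (subsetIl _ _) sL1L.
exact: Ttr TL1L2 TL2H.
Qed.

Lemma sat_closure_transfer_system : transfer_system G (sat_closure T).
Proof.
have [Tsub [Trefl [_ [_ [Tres Tconj]]]]] := TS.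
split; first by move=> K H [sKH [L _ TLH]]; split; last exact: (proj2 (Tsub _ _ TLH)).
split; first by move=> H sHG; split=> //; exists H => //; apply: Trefl.
split; first exact: sat_closure_trans.
split; first by move=> K H [sKH _] [sHK _]; apply: val_inj; apply/eqP; rewrite eqEsubset sKH.
split.
  move=> K H M sMG [sKH [L sLK TLH]]; split; first exact: setSI.
  by exists (L :&: M)%G; [apply: setSI | apply: Tres].
move=> K H g gG [sKH [L sLK TLH]]; split; first by rewrite conjSg.
by exists (L :^ g)%G; [rewrite conjSg | apply: Tconj].
Qed.

Lemma sat_closure_saturated : saturated (sat_closure T).
Proof.
move=> L K H sLK sKH [_ [L1 sL1L TL1H]]; split=> //.
by exists L1 => //; apply: subset_trans sLK.
Qed.

Lemma sub_sat_closure : rsub T (sat_closure T).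
Proof. by move=> K H TKH; split; [exact: (proj1 (proj1 TS _ _ TKH)) | exists K]. Qed.

Lemma hull_sub_sat_closure : rsub (hull G T) (sat_closure T).
Proof.
move=> K H; apply; [exact: sat_closure_transfer_system |
  exact: sat_closure_saturated | exact: sub_sat_closure].
Qed.

End SatClosure.

Lemma compatible_sat_closure (gT : finGroupType) (G : {group gT}) (T T' : subgrel gT) :
  (forall K H : {group gT}, T K H -> K \subset H /\ H \subset G) ->
  (forall H : {group gT}, H \subset G -> T' H H) ->
  compatible G T T' -> rsub (sat_closure T) T'.
Proof.
move=> Tsub T'refl [_ Tcomp] K H [sKH [L sLK TLH]].
have [sLH sHG] := Tsub _ _ TLH.
apply: (Tcomp H L K sHG sLH sKH TLH).
by rewrite setI_group_idPl //; apply: T'refl; apply: subset_trans sHG.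
Qed.

Theorem mainTheorem6 (gT : finGroupType) (G : {group gT}) (T T' : subgrel gT) :
  transfer_system G T -> transfer_system G T' -> compatible G T T' ->
  rsub (hull G T) T'.
Proof.
move=> TS [_ [T'refl _]] TT' K H hullKH.
apply: (compatible_sat_closure (proj1 TS) T'refl TT').
exact: hull_sub_sat_closure TS _ _ hullKH.
Qed.
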